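(* Let $R$ be a complete discrete valuation ring with fraction field $K$, maximal ideal $\mathfrak m$ and residue field $k=R/\mathfrak m$ of characteristic different from $2$. Let $E$ be an elliptic curve over $K$ given by $y^2=x^3+ax^2+bx$ with $a,b\in K$, let $E'$ be the elliptic curve $y^2=x^3-2ax^2+(a^2-4b)x$, and let $\delta_{E'}\colon E'(K)\to K^\times/(K^\times)^2$ be the homomorphism defined below. Regard $R^\times/(R^\times)^2$ as a subgroup of $K^\times/(K^\times)^2$. Suppose that, with respect to $R$ (via Tate's algorithm), $E$ and $E'$ have Kodaira symbols $\mathrm{I}_{2n}$ and $\mathrm{I}_n$, respectively, for some integer $n\geq 0$. Then: (i) if $E$ has split multiplicative reduction or $n$ is odd, then $\operatorname{Im}(\delta_{E'})=1$; (ii) if $E$ and $E'$ have good reduction (i.e. $n=0$), then $\operatorname{Im}(\delta_{E'})\subseteq R^\times/(R^\times)^2$.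
   Context: Let $\phi\colon E\to E'$ be the degree $2$ isogeny with kernel generated by $(0,0)$. The homomorphism $\delta_{E'}$ is the connecting homomorphism $E'(K)\to H^1(\operatorname{Gal}(\overline K/K),\ker\phi)\cong K^\times/(K^\times)^2$ (using $\ker\phi\cong\{\pm1\}$ as Galois modules); its kernel is $\phi(E(K))$, and explicitly $\delta_{E'}(O)=1$, $\delta_{E'}((0,0))=(a^2-4b)\cdot(K^\times)^2$, and $\delta_{E'}((x,y))=x\cdot(K^\times)^2$ for $(x,y)\in E'(K)\setminus\{O,(0,0)\}$. *)

From HB Require Import structures.
From mathcomp Require Import all_boot all_order all_algebra.
Set Implicit Arguments. Unset Strict Implicit. Unset Printing Implicit Defensive.
Import Order.TTheory GRing.Theory Num.Theory.
Local Open Scope ring_scope.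

Section Defs.
Variable K : fieldType.

(** * Discrete valuations on K (values on nonzero elements; v 0 is irrelevant) *)
Definition is_discrete_valuation (v : K -> int) : Prop :=
  [/\ (forall x y, x != 0 -> y != 0 -> v (x * y) = v x + v y),
      (forall x y, x != 0 -> y != 0 -> x + y != 0 ->
         Num.min (v x) (v y) <= v (x + y)) &
      (exists pi : K, pi != 0 /\ v pi = 1)].

Definition vge (v : K -> int) (x : K) (m : int) : Prop := x = 0 \/ m <= v x.
Definition integral (v : K -> int) (x : K) : Prop := vge v x 0.
Definition veq (v : K -> int) (x : K) (m : int) : Prop := x <> 0 /\ v x = m.
Definition unitR (v : K -> int) (x : K) : Prop := veq v x 0.

Definition v_cauchy (v : K -> int) (u : nat -> K) : Prop :=
  forall N : int, exists M : nat, forall p q, (M <= p)%N -> (M <= q)%N ->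
    vge v (u p - u q) N.
Definition v_converges (v : K -> int) (u : nat -> K) (l : K) : Prop :=
  forall N : int, exists M : nat, forall p, (M <= p)%N -> vge v (u p - l) N.
Definition v_complete (v : K -> int) : Prop :=
  forall u, v_cauchy v u -> exists l, v_converges v u l.

Record wmodel := WModel { a1 : K; a2 : K; a3 : K; a4 : K; a6 : K }.

Definition b2 W := a1 W ^+ 2 + 4 * a2 W.
Definition b4 W := 2 * a4 W + a1 W * a3 W.
Definition b6 W := a3 W ^+ 2 + 4 * a6 W.
Definition b8 W := a1 W ^+ 2 * a6 W + 4 * a2 W * a6 W - a1 W * a3 W * a4 W
                   + a2 W * a3 W ^+ 2 - a4 W ^+ 2.
Definition c4 W := b2 W ^+ 2 - 24 * b4 W.
Definition disc W := - b2 W ^+ 2 * b8 W - 8 * b4 W ^+ 3 - 27 * b6 W ^+ 2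
                     + 9 * b2 W * b4 W * b6 W.

(** W' is obtained from W by the change of variables
    x = u^2 x' + r, y = u^3 y' + s u^2 x' + t  (Silverman, Table 3.1) *)
Definition iso_model (W W' : wmodel) : Prop :=
  exists u r s t : K, u != 0 /\
  [/\ u * a1 W' = a1 W + 2 * s,
      u ^+ 2 * a2 W' = a2 W - s * a1 W + 3 * r - s ^+ 2,
      u ^+ 3 * a3 W' = a3 W + r * a1 W + 2 * t,
      u ^+ 4 * a4 W' = a4 W - s * a3 W + 2 * r * a2 W - (t + r * s) * a1 W
                       + 3 * r ^+ 2 - 2 * s * t &
      u ^+ 6 * a6 W' = a6 W + r * a4 W + r ^+ 2 * a2 W + r ^+ 3 - t * a3 W
                       - t ^+ 2 - r * t * a1 W].

Definition integral_model (v : K -> int) (W : wmodel) : Prop :=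
  [/\ integral v (a1 W), integral v (a2 W), integral v (a3 W),
      integral v (a4 W) & integral v (a6 W)].

(** Kodaira symbol I_m, as produced by Tate's algorithm (steps 1 and 2):
    m = 0 : some integral model has unit discriminant (step 1);
    m >= 1: some integral model has pi | a3, a4, a6, pi not dividing b2,
            and v(disc) = m (step 2). *)
Definition kodaira_I (v : K -> int) (W : wmodel) (m : nat) : Prop :=
  exists W', [/\ iso_model W W', integral_model v W' &
    if m == 0%N then veq v (disc W') 0
    else [/\ vge v (a3 W') 1, vge v (a4 W') 1, vge v (a6 W') 1,
             veq v (b2 W') 0 & veq v (disc W') (m%:Z)]].

(** Split multiplicative reduction (Tate's algorithm, step 2): multiplicative
    reduction, and T^2 + a1 T - a2 splits over the residue field. *)
Definition split_mult (v : K -> int) (W : wmodel) : Prop :=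
  exists W', [/\ iso_model W W', integral_model v W',
    [/\ vge v (a3 W') 1, vge v (a4 W') 1, vge v (a6 W') 1,
        veq v (b2 W') 0 & vge v (disc W') 1] &
    exists T : K, integral v T /\ vge v (T ^+ 2 + a1 W' * T - a2 W') 1].

Definition curveE (a b : K) : wmodel := WModel 0 a 0 b 0.
Definition curveE' (a b : K) : wmodel := WModel 0 (- 2 * a) 0 (a ^+ 2 - 4 * b) 0.

(** Points of y^2 = x^3 + A x^2 + B x over K; None is the point O *)
Definition on_curve2 (A B : K) (P : option (K * K)) : Prop :=
  match P with
  | None => True
  | Some (x, y) => y ^+ 2 = x ^+ 3 + A * x ^+ 2 + B * x
  end.

(** A representative in K^x of delta_{E'}(P) in K^x/(K^x)^2 *)
Definition delta_E'_rep (a b : K) (P : option (K * K)) : K :=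
  match P with
  | None => 1
  | Some (x, y) => if (x == 0) && (y == 0) then a ^+ 2 - 4 * b else x
  end.

Definition trivial_sq_class (z : K) : Prop := exists s : K, s != 0 /\ z = s ^+ 2.
Definition in_unit_sq_class (v : K -> int) (z : K) : Prop :=
  exists w s : K, unitR v w /\ s != 0 /\ z = w * s ^+ 2.

End Defs.

(* Work at the scale k of the model given by Tate's algorithm: v(c4) = 4k.
   For types I_2n and I_n with n > 0, the discriminants 16 b^2 (a^2 - 4b) and
   256 b (a^2 - 4b)^2 force v(a) = 2k and v(b) = 4k + n.  A point (X, Y) of E'
   other than O and (0, 0) satisfies Y^2 = X Q with Q = (X - a)^2 - 4b, and
   its image is X.  Unless X is very close to a, Q is congruent to a square
   closely enough for Hensel's lemma, so X is a square as well.  When X is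
   close to a, X is a square because a is one modulo pi^(2k+1) in the split
   case, while for n odd this cannot happen since v(Q) = 4k + n would make
   v(Y^2) odd.  With good reduction v(b) = v(a^2 - 4b) = 4k, and the same
   comparison of v(X) with 2k shows that v(X) is always even. *)

From HB Require Import structures.
From mathcomp Require Import all_boot all_order all_algebra ring zify.
Import Order.TTheory GRing.Theory Num.Theory.
Set Implicit Arguments. Unset Strict Implicit.
Local Open Scope ring_scope.

Section Delta.
Variable K : fieldType.

Lemma trivial_sq_class_of_sqr_eq_mul (X Y Q : K) :
  X != 0 -> Y ^+ 2 = X * Q -> trivial_sq_class Q -> trivial_sq_class X.
Proof.
move=> X0 XY [q [q0 Qq]].
have Y0 : Y != 0.
  by apply: contraNneq (mulf_neq0 X0 (expf_neq0 2 q0)) => Y0; rewrite -Qq -XY Y0 expr0n.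
exists (Y / q); split; first by rewrite mulf_neq0 ?invr_eq0.
by rewrite expr_div_n XY Qq mulfK ?expf_neq0.
Qed.

Variant delta_E'_rep_spec (A B : K) : option (K * K) -> K -> Prop :=
  | DeltaO : delta_E'_rep_spec A B None 1
  | DeltaT : delta_E'_rep_spec A B (Some (0, 0)) (A ^+ 2 - 4 * B)
  | DeltaX X Y of X != 0 & Y ^+ 2 = X * (X ^+ 2 - 2 * A * X + (A ^+ 2 - 4 * B)) :
      delta_E'_rep_spec A B (Some (X, Y)) X.

Lemma delta_E'_repP A B P : on_curve2 (- 2 * A) (A ^+ 2 - 4 * B) P ->
  delta_E'_rep_spec A B P (delta_E'_rep A B P).
Proof.
case: P => [[X Y]|] /= XY; last exact: DeltaO.
have [X0|X0] := eqVneq X 0; last by apply: DeltaX => //; rewrite XY; ring.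
have /eqP : Y ^+ 2 = 0 by rewrite XY X0; ring.
by rewrite X0 expf_eq0 /= => /eqP ->; rewrite eqxx; apply: DeltaT.
Qed.

End Delta.

Section Weierstrass.
Variable K : fieldType.
Implicit Types (W : wmodel K) (u r s t a b : K).

Definition c6 W := - b2 W ^+ 3 + 36 * b2 W * b4 W - 216 * b6 W.

Definition scale_model u W :=
  WModel (u * a1 W) (u ^+ 2 * a2 W) (u ^+ 3 * a3 W) (u ^+ 4 * a4 W) (u ^+ 6 * a6 W).

Definition translate_model r s t W :=
  WModel (a1 W + 2 * s) (a2 W - s * a1 W + 3 * r - s ^+ 2) (a3 W + r * a1 W + 2 * t)
    (a4 W - s * a3 W + 2 * r * a2 W - (t + r * s) * a1 W + 3 * r ^+ 2 - 2 * s * t)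
    (a6 W + r * a4 W + r ^+ 2 * a2 W + r ^+ 3 - t * a3 W - t ^+ 2 - r * t * a1 W).

Lemma iso_modelP W W' : iso_model W W' ->
  exists u r s t, u != 0 /\ scale_model u W' = translate_model r s t W.
Proof.
case=> u [r [s [t [u0 [e1 e2 e3 e4 e6]]]]].
by exists u, r, s, t; rewrite /scale_model e1 e2 e3 e4 e6.
Qed.

Lemma c4_scale u W : c4 (scale_model u W) = u ^+ 4 * c4 W.
Proof. by rewrite /c4 /b2 /b4 /=; ring. Qed.

Lemma c6_scale u W : c6 (scale_model u W) = u ^+ 6 * c6 W.
Proof. by rewrite /c6 /b2 /b4 /b6 /=; ring. Qed.

Lemma disc_scale u W : disc (scale_model u W) = u ^+ 12 * disc W.
Proof. by rewrite /disc /b2 /b4 /b6 /b8 /=; ring. Qed.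

Lemma c4_translate r s t W : c4 (translate_model r s t W) = c4 W.
Proof. by rewrite /c4 /b2 /b4 /=; ring. Qed.

Lemma c6_translate r s t W : c6 (translate_model r s t W) = c6 W.
Proof. by rewrite /c6 /b2 /b4 /b6 /=; ring. Qed.

Lemma disc_translate r s t W : disc (translate_model r s t W) = disc W.
Proof. by rewrite /disc /b2 /b4 /b6 /b8 /=; ring. Qed.

Lemma iso_model_invariants W W' : iso_model W W' -> exists2 u, u != 0 &
  [/\ c4 W = u ^+ 4 * c4 W', c6 W = u ^+ 6 * c6 W' & disc W = u ^+ 12 * disc W'].
Proof.
case/iso_modelP=> u [r [s [t [u0 uW']]]]; exists u => //.
by rewrite -c4_scale -c6_scale -disc_scale uW' c4_translate c6_translate disc_translate.
Qed.

Lemma c4_curveE a b : c4 (curveE a b) = 16 * (a ^+ 2 - 3 * b).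
Proof. by rewrite /c4 /b2 /b4 /=; ring. Qed.

Lemma c6_curveE a b : c6 (curveE a b) = 32 * a * (9 * b - 2 * a ^+ 2).
Proof. by rewrite /c6 /b2 /b4 /b6 /=; ring. Qed.

Lemma disc_curveE a b : disc (curveE a b) = 16 * b ^+ 2 * (a ^+ 2 - 4 * b).
Proof. by rewrite /disc /b2 /b4 /b6 /b8 /=; ring. Qed.

Lemma c4_curveE' a b : c4 (curveE' a b) = 16 * (a ^+ 2 + 12 * b).
Proof. by rewrite /c4 /b2 /b4 /=; ring. Qed.

Lemma disc_curveE' a b : disc (curveE' a b) = 256 * b * (a ^+ 2 - 4 * b) ^+ 2.
Proof. by rewrite /disc /b2 /b4 /b6 /b8 /=; ring. Qed.

End Weierstrass.

Section Valuation.
Variables (K : fieldType) (v : K -> int).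
Hypothesis hv : is_discrete_valuation v.

Lemma valM x y : x != 0 -> y != 0 -> v (x * y) = v x + v y.
Proof. by case: hv => vM _ _; apply: vM. Qed.

Lemma val1 : v 1 = 0.
Proof. by have := @valM 1 1; rewrite mulr1 oner_neq0; lia. Qed.

Lemma valN x : v (- x) = v x.
Proof.
have N1_neq0 : (-1 : K) != 0 by rewrite oppr_eq0 oner_neq0.
have valN1 : v (-1) = 0 by have := valM N1_neq0 N1_neq0; rewrite mulrNN mulr1 val1; lia.
have [->|x0] := eqVneq x 0; first by rewrite oppr0.
by rewrite -mulN1r valM // valN1 add0r.
Qed.

Lemma valV x : x != 0 -> v x^-1 = - v x.
Proof. by move=> x0; have := valM x0 (invr_neq0 x0); rewrite mulfV // val1; lia. Qed.

Lemma valX x n : x != 0 -> v (x ^+ n) = v x * n%:Z.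
Proof.
move=> x0; elim: n => [|n IHn]; first by rewrite expr0 val1 mulr0.
by rewrite exprS valM ?expf_neq0 // IHn; lia.
Qed.

Lemma vgeW x m k : vge v x m -> k <= m -> vge v x k.
Proof. by case=> [->|xm] km; [left | right; lia]. Qed.

Lemma vgeN x m : vge v x m -> vge v (- x) m.
Proof. by case=> [->|xm]; [left; rewrite oppr0 | right; rewrite valN]. Qed.

Lemma vgeD x y m : vge v x m -> vge v y m -> vge v (x + y) m.
Proof.
case=> [->|xm]; first by rewrite add0r.
case=> [->|ym]; first by rewrite addr0; right.
have [->|x0] := eqVneq x 0; first by rewrite add0r; right.
have [->|y0] := eqVneq y 0; first by rewrite addr0; right.
have [->|xy0] := eqVneq (x + y) 0; first by left.
case: hv => _ vD _; right; apply: le_trans (vD _ _ x0 y0 xy0).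
by rewrite le_min xm ym.
Qed.

Lemma vgeB x y m : vge v x m -> vge v y m -> vge v (x - y) m.
Proof. by move=> xm /vgeN; apply: vgeD. Qed.

Lemma vgeM x y m k : vge v x m -> vge v y k -> vge v (x * y) (m + k).
Proof.
case=> [->|xm]; first by rewrite mul0r; left.
case=> [->|yk]; first by rewrite mulr0; left.
have [->|x0] := eqVneq x 0; first by rewrite mul0r; left.
have [->|y0] := eqVneq y 0; first by rewrite mulr0; left.
by right; rewrite valM //; lia.
Qed.

Lemma vge_eq0 x : (forall m, vge v x m) -> x = 0.
Proof. by move=> xge; case: (xge (v x + 1)) => // ?; lia. Qed.

Lemma integralM x y : integral v x -> integral v y -> integral v (x * y).
Proof. by move=> xi yi; apply: vgeW (vgeM xi yi) _; lia. Qed.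

Lemma integralX x n : integral v x -> integral v (x ^+ n).
Proof.
move=> xi; elim: n => [|n IHn]; first by rewrite expr0; right; rewrite val1.
by rewrite exprS; apply: integralM.
Qed.

Lemma integral_nat n : integral v n%:R.
Proof.
elim: n => [|n IHn]; first by left.
by rewrite -addn1 natrD; apply: vgeD IHn _; right; rewrite val1.
Qed.

Lemma veq_val x : x != 0 -> veq v x (v x).
Proof. by move=> x0; split=> //; apply/eqP. Qed.

Lemma veq1 : veq v 1 0.
Proof. by rewrite -val1; apply/veq_val/oner_neq0. Qed.

Lemma veq_neq0 x m : veq v x m -> x != 0.
Proof. by case=> /eqP. Qed.

Lemma veq_vge x m : veq v x m -> vge v x m.
Proof. by case=> _ <-; right. Qed.

Lemma vge_veq x m k : vge v x m -> veq v x k -> m <= k.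
Proof. by case=> [->|xm] [] // _ <-. Qed.

Lemma veq_eq x m k : veq v x m -> m = k -> veq v x k.
Proof. by move=> ? <-. Qed.

Lemma veq_uniq x m k : veq v x m -> veq v x k -> m = k.
Proof. by case=> _ <- [_ <-]. Qed.

Lemma veqM x y m k : veq v x m -> veq v y k -> veq v (x * y) (m + k).
Proof.
move=> [/eqP x0 <-] [/eqP y0 <-].
by split; [apply/eqP; rewrite mulf_neq0 | rewrite valM].
Qed.

Lemma veqN x m : veq v x m -> veq v (- x) m.
Proof. by case=> x0 <-; split; [rewrite -oppr0 => /oppr_inj | rewrite valN]. Qed.

Lemma veqV x m : veq v x m -> veq v x^-1 (- m).
Proof.
move=> [/eqP x0 <-].
by split; [apply/eqP; rewrite invr_eq0 | rewrite valV].
Qed.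

Lemma veqX x m n : veq v x m -> veq v (x ^+ n) (m * n%:Z).
Proof.
move=> [/eqP x0 <-].
by split; [apply/eqP; rewrite expf_neq0 | rewrite valX].
Qed.

Lemma veqD x y m : veq v x m -> vge v y (m + 1) -> veq v (x + y) m.
Proof.
move=> xm ym.
have xy_ge : vge v (x + y) m by apply: vgeD (veq_vge xm) (vgeW ym _); lia.
have xy_lt : ~ vge v (x + y) (m + 1).
  by move=> /vgeB /(_ ym); rewrite addrK => /vge_veq /(_ xm); lia.
split; first by move=> xy0; apply: xy_lt; left.
case: xy_ge => [xy0|xy_ge]; first by exfalso; apply: xy_lt; left.
have : ~ m + 1 <= v (x + y) by move=> ?; apply: xy_lt; right.
lia.
Qed.

Lemma veq_sqr x m : veq v (x ^+ 2) (m * 2) -> veq v x m.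
Proof.
move=> x2m; have x0 : x != 0 by apply: contraNneq (veq_neq0 x2m) => ->; rewrite expr0n.
by have := veq_uniq x2m (veqX 2 (veq_val x0)); split; [apply/eqP | lia].
Qed.

Lemma vge_sqr x m : vge v (x ^+ 2) (m * 2) -> vge v x m.
Proof.
have [->|x0] := eqVneq x 0; first by left.
by move/vge_veq/(_ (veqX 2 (veq_val x0))) => ?; right; lia.
Qed.

Lemma veq_cancel c x m : veq v c 0 -> veq v (c * x) m -> veq v x m.
Proof.
move=> c_unit /(veqM (veqV c_unit)).
by rewrite mulKf ?(veq_neq0 c_unit) // oppr0 add0r.
Qed.

Lemma vge_cancel c x m : veq v c 0 -> vge v (c * x) m -> vge v x m.
Proof.
move=> c_unit /(vgeM (veq_vge (veqV c_unit))).
by rewrite mulKf ?(veq_neq0 c_unit) // oppr0 add0r.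
Qed.

Lemma veq_exists k : exists s, veq v s k.
Proof.
case: hv => _ _ [pi [pi0 pi1]].
have pi_veq : veq v pi 1 by rewrite -pi1; apply: veq_val.
case: k => j; first by exists (pi ^+ j); have := veqX j pi_veq; rewrite mul1r.
by exists (pi ^+ j.+1)^-1; have := veqV (veqX j.+1 pi_veq); rewrite mul1r NegzE.
Qed.

Lemma veq_sqr_eq_mul X Y Q m k :
  Y ^+ 2 = X * Q -> veq v X m -> veq v Q k -> m + k = v Y * 2.
Proof.
move=> XY Xm Qk; have := veqM Xm Qk; rewrite -XY => Y2m.
have Y0 : Y != 0 by apply: contraNneq (veq_neq0 Y2m) => ->; rewrite expr0n.
by have := veq_uniq Y2m (veqX 2 (veq_val Y0)); lia.
Qed.

Lemma in_unit_sq_class_even x k : veq v x (k * 2) -> in_unit_sq_class v x.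
Proof.
move=> xk; have [s sk] := veq_exists k; have s0 := veq_neq0 sk.
exists (x / s ^+ 2), s; split; last by rewrite s0 divfK ?expf_neq0.
by apply: veq_eq (veqM xk (veqV (veqX 2 sk))) _; lia.
Qed.

Lemma b4_ge1 W : integral v (a1 W) -> vge v (a3 W) 1 -> vge v (a4 W) 1 -> vge v (b4 W) 1.
Proof.
move=> a1_int a3_ge a4_ge.
by apply: vgeD (vgeW (vgeM (integral_nat 2) a4_ge) _) (vgeW (vgeM a1_int a3_ge) _); lia.
Qed.

Lemma c4_integral W : integral_model v W -> integral v (c4 W).
Proof.
case=> i1 i2 i3 i4 _.
have b2_int : integral v (b2 W).
  by rewrite /b2 expr2; apply: vgeD (integralM i1 i1) (integralM (integral_nat 4) i2).
have b4_int : integral v (b4 W).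
  by apply: vgeD (integralM (integral_nat 2) i4) (integralM i1 i3).
rewrite /c4 expr2.
by apply: vgeB (integralM b2_int b2_int) (integralM (integral_nat 24) b4_int).
Qed.

Lemma c4_unit W : integral_model v W -> vge v (a3 W) 1 -> vge v (a4 W) 1 ->
  veq v (b2 W) 0 -> veq v (c4 W) 0.
Proof.
case=> a1_int _ _ _ _ a3_ge a4_ge b2_unit; have b4_ge := b4_ge1 a1_int a3_ge a4_ge.
by apply: veqD (veqX 2 b2_unit) (vgeN (vgeW (vgeM (integral_nat 24) b4_ge) _)); lia.
Qed.

(* With s = 2T + a1, the root T gives s^2 = b2 mod pi, and c6 = -b2^3 mod pi
   because pi divides b4 and b6. *)
Lemma c6_split W T : integral_model v W ->
  vge v (a3 W) 1 -> vge v (a4 W) 1 -> vge v (a6 W) 1 -> veq v (b2 W) 0 ->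
  integral v T -> vge v (T ^+ 2 + a1 W * T - a2 W) 1 ->
  veq v (2 * T + a1 W) 0 /\ vge v (c6 W + (2 * T + a1 W) ^+ 6) 1.
Proof.
case=> a1_int _ _ _ _ a3_ge a4_ge a6_ge b2_unit T_int T_root.
have b4_ge := b4_ge1 a1_int a3_ge a4_ge.
have b6_ge : vge v (b6 W) 1.
  rewrite /b6 expr2.
  by apply: vgeD (vgeW (vgeM a3_ge a3_ge) _) (vgeW (vgeM (integral_nat 4) a6_ge) _); lia.
set s := 2 * T + a1 W.
have s2_b2 : vge v (s ^+ 2 - b2 W) 1.
  have -> : s ^+ 2 - b2 W = 4 * (T ^+ 2 + a1 W * T - a2 W) by rewrite /s /b2; ring.
  by apply: vgeW (vgeM (integral_nat 4) T_root) _; lia.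
have s_unit : veq v s 0.
  by apply: veq_sqr; rewrite -(subrKC (b2 W) (s ^+ 2)); apply: veqD b2_unit s2_b2.
split=> //.
have -> : c6 W + s ^+ 6 = (s ^+ 2 - b2 W) * (s ^+ 4 + s ^+ 2 * b2 W + b2 W ^+ 2)
                          + (36 * b2 W * b4 W - 216 * b6 W) by rewrite /c6; ring.
have s_int := veq_vge s_unit; have b2_int := veq_vge b2_unit.
have cofactor_int : integral v (s ^+ 4 + s ^+ 2 * b2 W + b2 W ^+ 2).
  apply: vgeD (integralX 2 b2_int).
  exact: vgeD (integralX 4 s_int) (integralM (integralX 2 s_int) b2_int).
apply: vgeD; first by apply: vgeW (vgeM s2_b2 cofactor_int) _; lia.
apply: vgeB.
  by apply: vgeW (vgeM (integralM (integral_nat 36) b2_int) b4_ge) _; lia.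
by apply: vgeW (vgeM (integral_nat 216) b6_ge) _; lia.
Qed.

(* Here k is v(u) for the scaling factor u to the model of Tate's algorithm. *)
Lemma kodaira_I0_val W : kodaira_I v W 0 ->
  exists k, vge v (c4 W) (k * 4) /\ veq v (disc W) (k * 12).
Proof.
case=> W' [/iso_model_invariants [u u0 [-> _ ->]] W'_int /= disc_unit].
exists (v u); split; last by apply: veq_eq (veqM (veqX 12 (veq_val u0)) disc_unit) _; lia.
by apply: vgeW (vgeM (veq_vge (veqX 4 (veq_val u0))) (c4_integral W'_int)) _; lia.
Qed.

Lemma kodaira_I_mult_val W m : (0 < m)%N -> kodaira_I v W m ->
  exists k, veq v (c4 W) (k * 4) /\ veq v (disc W) (k * 12 + m%:Z).
Proof.
move=> m_gt0 [W' [/iso_model_invariants [u u0 [-> _ ->]] W'_int]].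
rewrite eqn0Ngt m_gt0 => -[a3_ge a4_ge _ b2_unit disc_val].
exists (v u); split; last by apply: veq_eq (veqM (veqX 12 (veq_val u0)) disc_val) _; lia.
by apply: veq_eq (veqM (veqX 4 (veq_val u0)) (c4_unit W'_int a3_ge a4_ge b2_unit)) _; lia.
Qed.

Lemma split_mult_val W : split_mult v W -> exists k,
  [/\ veq v (c4 W) (k * 4), vge v (disc W) (k * 12 + 1) &
      exists2 s, veq v s k & vge v (c6 W + s ^+ 6) (k * 6 + 1)].
Proof.
case=> W' [/iso_model_invariants [u u0 [-> -> ->]] W'_int].
move=> [a3_ge a4_ge a6_ge b2_unit disc_ge] [T [T_int T_root]].
have [s_unit c6_ge] := c6_split W'_int a3_ge a4_ge a6_ge b2_unit T_int T_root.
have u_val := veq_val u0.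
exists (v u); split.
- by apply: veq_eq (veqM (veqX 4 u_val) (c4_unit W'_int a3_ge a4_ge b2_unit)) _; lia.
- by apply: vgeW (vgeM (veq_vge (veqX 12 u_val)) disc_ge) _; lia.
exists (u * (2 * T + a1 W')); first by apply: veq_eq (veqM u_val s_unit) _; lia.
rewrite exprMn -mulrDr.
by apply: vgeW (vgeM (veq_vge (veqX 6 u_val)) c6_ge) _; lia.
Qed.

Lemma good_not_split_mult W : kodaira_I v W 0 -> ~ split_mult v W.
Proof.
move=> /kodaira_I0_val [k [c4_ge disc_val]] /split_mult_val [k' [c4_val disc_ge _]].
by have := vge_veq c4_ge c4_val; have := vge_veq disc_ge disc_val; lia.
Qed.

Section OddResidueChar.
Hypothesis h2 : unitR v 2.

Lemma veq_pow2 k : veq v (2 ^ k)%:R 0.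
Proof. by rewrite natrX; apply: veq_eq (veqX k h2) _; rewrite mul0r. Qed.

Lemma curveE_disc_val a b d d' :
  veq v (disc (curveE a b)) d -> veq v (disc (curveE' a b)) d' ->
  [/\ b != 0, a ^+ 2 - 4 * b != 0, v b * 2 + v (a ^+ 2 - 4 * b) = d
    & v b + v (a ^+ 2 - 4 * b) * 2 = d'].
Proof.
rewrite disc_curveE disc_curveE' -[16 * _ * _]mulrA -[256 * _ * _]mulrA.
move=> /(veq_cancel (veq_pow2 4)) discE /(veq_cancel (veq_pow2 8)) discE'.
have [b0 D0] : b != 0 /\ a ^+ 2 - 4 * b != 0.
  by have := veq_neq0 discE; rewrite mulf_eq0 negb_or expf_eq0 /= => /andP.
have [b_val D_val] := (veq_val b0, veq_val D0).
split=> //; first exact: veq_uniq (veqM (veqX 2 b_val) D_val) discE.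
exact: veq_uniq (veqM b_val (veqX 2 D_val)) discE'.
Qed.

Lemma curveE_mult_val a b k k' n : (0 < n)%N ->
  veq v (c4 (curveE a b)) (k * 4) -> veq v (disc (curveE a b)) (k * 12 + (2 * n)%N%:Z) ->
  veq v (c4 (curveE' a b)) (k' * 4) -> veq v (disc (curveE' a b)) (k' * 12 + n%:Z) ->
  veq v a (k * 2) /\ veq v b (k * 4 + n%:Z).
Proof.
move=> n_gt0 c4E discE c4E' /(curveE_disc_val discE) [b0 D0 discE_val discE'_val].
move: c4E c4E'; rewrite c4_curveE c4_curveE'.
move=> /(veq_cancel (veq_pow2 4)) c4E /(veq_cancel (veq_pow2 4)) c4E'.
set D := a ^+ 2 - 4 * b in D0 discE_val discE'_val *.
have [b_val D_val] := (veq_val b0, veq_val D0).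
have [b_lt|b_gt|b_eq] := ltgtP (v b) (k * 4).
- have : veq v D (v b).
    rewrite (_ : D = - b + (a ^+ 2 - 3 * b)); last by rewrite /D; ring.
    by apply: veqD (veqN b_val) (vgeW (veq_vge c4E) _); lia.
  by move/veq_uniq/(_ D_val); lia.
- have a_val : veq v a (k * 2).
    apply: veq_sqr; rewrite -(subrK (3 * b) (a ^+ 2)).
    by apply: veq_eq (veqD c4E (vgeW (vgeM (integral_nat 3) (veq_vge b_val)) _)) _; lia.
  have b4_ge : vge v (4 * b) (k * 4 + 1).
    by apply: vgeW (vgeM (integral_nat 4) (veq_vge b_val)) _; lia.
  have D_val4 : veq v D (k * 4) by apply: veqD (veq_eq (veqX 2 a_val) _) (vgeN b4_ge); lia.
  split=> //; apply: veq_eq b_val _.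
  by have := veq_uniq D_val D_val4; lia.
have : veq v (a ^+ 2 + 12 * b) (k * 4).
  rewrite (_ : _ + _ = 16 * b + D); last by rewrite /D; ring.
  by apply: veqD (veq_eq (veqM (veq_pow2 4) b_val) _) (vgeW (veq_vge D_val) _); lia.
by move/veq_uniq/(_ c4E'); lia.
Qed.

Lemma curveE_good_val a b k k' :
  vge v (c4 (curveE a b)) (k * 4) -> veq v (disc (curveE a b)) (k * 12) ->
  veq v (disc (curveE' a b)) (k' * 12) ->
  [/\ vge v a (k * 2), veq v b (k * 4) & veq v (a ^+ 2 - 4 * b) (k * 4)].
Proof.
move=> c4E discE /(curveE_disc_val discE) [b0 D0 discE_val discE'_val].
move: c4E; rewrite c4_curveE => /(vge_cancel (veq_pow2 4)) c4E.
set D := a ^+ 2 - 4 * b in D0 discE_val discE'_val *.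
have [b_val D_val] := (veq_val b0, veq_val D0).
have [k'_lt|k'_gt|k'_eq] := ltgtP k' k.
- have : veq v (a ^+ 2 - 3 * b) (v D).
    rewrite (_ : _ - _ = D + b); last by rewrite /D; ring.
    by apply: veqD D_val (vgeW (veq_vge b_val) _); lia.
  by move/(vge_veq c4E); lia.
- have : veq v (a ^+ 2 - 3 * b) (v b).
    rewrite (_ : _ - _ = b + D); last by rewrite /D; ring.
    by apply: veqD b_val (vgeW (veq_vge D_val) _); lia.
  by move/(vge_veq c4E); lia.
have [b_eq D_eq] : v b = k * 4 /\ v D = k * 4 by lia.
split; [apply: vge_sqr | exact: veq_eq b_val b_eq | exact: veq_eq D_val D_eq].
rewrite -(subrK (3 * b) (a ^+ 2)).
by apply: vgeD (vgeW c4E _) (vgeW (vgeM (integral_nat 3) (veq_vge b_val)) _); lia.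
Qed.

Lemma curveE_split_sq a b k : veq v a (k * 2) -> vge v b (k * 4 + 1) ->
  split_mult v (curveE a b) -> exists2 z, veq v z k & vge v (a - z ^+ 2) (k * 2 + 1).
Proof.
move=> a_val b_ge /split_mult_val [k' [c4_val _ [s s_val c6_ge]]].
have c4_val' : veq v (c4 (curveE a b)) (k * 4).
  have b3_ge : vge v (3 * b) (k * 4 + 1) by apply: vgeW (vgeM (integral_nat 3) b_ge) _; lia.
  have a2b_val : veq v (a ^+ 2 - 3 * b) (k * 4).
    by apply: veqD (veq_eq (veqX 2 a_val) _) (vgeN b3_ge); lia.
  by rewrite c4_curveE; apply: veq_eq (veqM (veq_pow2 4) a2b_val) _; lia.
have k'k : k' = k by have := veq_uniq c4_val c4_val'; lia.
subst k'; have s0 := veq_neq0 s_val.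
(* c6 = 288 a b - 64 a^3 where 288 a b and c6 + s^6 are divisible by
   pi^(6k+1); hence s^6 = 64 a^3 and a = (8 a^2 / s^3)^2 modulo higher powers
   of pi. *)
exists (8 * a ^+ 2 / s ^+ 3).
  by apply: veq_eq (veqM (veqM (veq_pow2 3) (veqX 2 a_val)) (veqV (veqX 3 s_val))) _; lia.
have -> : a - (8 * a ^+ 2 / s ^+ 3) ^+ 2
          = a * ((c6 (curveE a b) + s ^+ 6) - 288 * a * b) / s ^+ 6.
  by rewrite c6_curveE; field.
have a_ge := veq_vge a_val.
have ab_ge : vge v (288 * a * b) (k * 6 + 1).
  by apply: vgeW (vgeM (vgeM (integral_nat 288) a_ge) b_ge) _; lia.
by apply: vgeW (vgeM (vgeM a_ge (vgeB c6_ge ab_ge)) (veq_vge (veqV (veqX 6 s_val)))) _; lia.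
Qed.

Lemma delta_E'_rep_unit a b k P :
  vge v a (k * 2) -> veq v b (k * 4) -> veq v (a ^+ 2 - 4 * b) (k * 4) ->
  on_curve2 (- 2 * a) (a ^+ 2 - 4 * b) P -> in_unit_sq_class v (delta_E'_rep a b P).
Proof.
move=> a_ge b_val D_val /delta_E'_repP [||X Y X0].
- by apply: (in_unit_sq_class_even (k := 0)); apply: veq1.
- by apply: (in_unit_sq_class_even (k := k * 2)); apply: veq_eq D_val _; lia.
set Q := _ + _ => XY.
have X_val := veq_val X0.
have Q_even j : veq v Q (j * 2) -> in_unit_sq_class v X.
  move=> Qj; apply: (in_unit_sq_class_even (k := v Y - j)); apply: (veq_eq X_val).
  by have := veq_sqr_eq_mul XY X_val Qj; lia.
have a2_ge : vge v (2 * a) (k * 2) by apply: vgeW (vgeM (veq_vge h2) a_ge) _; lia.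
have [X_lt|X_gt|X_eq] := ltgtP (v X) (k * 2).
- apply: (Q_even (v X)).
  have -> : Q = X ^+ 2 + (- (2 * a * X) + (a ^+ 2 - 4 * b)) by rewrite /Q; ring.
  apply: veqD (veqX 2 X_val) (vgeD _ _).
    by apply/vgeN/(vgeW (vgeM a2_ge (veq_vge X_val))); lia.
  by apply: vgeW (veq_vge D_val) _; lia.
- apply: (Q_even (k * 2)).
  have -> : Q = (a ^+ 2 - 4 * b) + X * (X - 2 * a) by rewrite /Q; ring.
  have X_ge : vge v X (k * 2 + 1) by right; lia.
  have X2a_ge : vge v (X - 2 * a) (k * 2) by apply: vgeB (vgeW X_ge _) a2_ge; lia.
  by apply: veq_eq (veqD D_val (vgeW (vgeM X_ge X2a_ge) _)) _; lia.
by apply: (in_unit_sq_class_even (k := k)); apply: veq_eq X_val _.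
Qed.

Section Hensel.
Hypothesis hcomplete : v_complete v.

Section NewtonSqrt.
Variable F : K.
Hypothesis hF : vge v (F - 1) 1.

(* Newton's iteration for the square root of F with the derivative 2 r
   replaced by 2, legitimate since r = 1 mod pi; it converges linearly. *)
Fixpoint newton_sqrt (k : nat) : K :=
  if k is k'.+1 then newton_sqrt k' + (F - newton_sqrt k' ^+ 2) / 2 else 1.

Lemma newton_sqrt_approx k :
  vge v (newton_sqrt k - 1) 1 /\ vge v (newton_sqrt k ^+ 2 - F) k.+1%:Z.
Proof.
elim: k => [|k [r1 rF]] /=; first by rewrite subrr expr1n -opprB; split; [left | apply: vgeN].
set r := newton_sqrt k in r1 rF *; set e := (F - r ^+ 2) / 2.
have e_ge : vge v e k.+1%:Z.
  by have := vgeM (vgeN rF) (veq_vge (veqV h2)); rewrite opprB oppr0 addr0.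
split; first by rewrite addrAC; apply: vgeD r1 (vgeW e_ge _); lia.
have -> : (r + e) ^+ 2 - F = (r ^+ 2 - F) * (1 - r) + e ^+ 2.
  by rewrite /e; field; apply: veq_neq0 h2.
apply: vgeD; first by rewrite -[1 - r]opprB; apply: vgeW (vgeM rF (vgeN r1)) _; lia.
by apply: vgeW (vgeM e_ge e_ge) _; lia.
Qed.

Lemma newton_sqrt_step p : vge v (newton_sqrt p.+1 - newton_sqrt p) p.+1%:Z.
Proof.
have [_ rF] := newton_sqrt_approx p.
rewrite /= addrAC subrr add0r.
by have := vgeM (vgeN rF) (veq_vge (veqV h2)); rewrite opprB oppr0 addr0.
Qed.

Lemma newton_sqrt_cauchy M p : (M <= p)%N ->
  vge v (newton_sqrt p - newton_sqrt M) M.+1%:Z.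
Proof.
elim: p => [|p IHp]; first by rewrite leqn0 => /eqP ->; rewrite subrr; left.
rewrite leq_eqVlt => /predU1P [->|Mp]; first by rewrite subrr; left.
rewrite -(subrKA (newton_sqrt p)); apply: vgeD (IHp Mp).
by apply: vgeW (newton_sqrt_step p) _; lia.
Qed.

Lemma trivial_sq_class_near1 : trivial_sq_class F.
Proof.
have [|l newton_l] := hcomplete (u := newton_sqrt).
  move=> N; exists `|N|%N => p q Np Nq.
  have -> : newton_sqrt p - newton_sqrt q =
    (newton_sqrt p - newton_sqrt `|N|) - (newton_sqrt q - newton_sqrt `|N|) by ring.
  by apply: vgeW (vgeB (newton_sqrt_cauchy Np) (newton_sqrt_cauchy Nq)) _; lia.
have lF : l ^+ 2 = F.
  apply/eqP; rewrite -subr_eq0; apply/eqP/vge_eq0 => N.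
  have [M newtonM] := newton_l `|N|%:Z.
  set p := maxn M `|N|; set r := newton_sqrt p.
  have rl : vge v (r - l) `|N|%:Z by apply: newtonM; apply: leq_maxl.
  have [r1 rF] := newton_sqrt_approx p.
  have r_int : integral v r by rewrite -(subrK 1 r); apply: vgeD (vgeW r1 _) (integral_nat 1).
  have -> : l ^+ 2 - F = (r ^+ 2 - F) - (r - l) * (r + l) by ring.
  apply: vgeB; first by apply: vgeW rF _; have := leq_maxr M `|N|; lia.
  have rl_int : integral v (r + l).
    have -> : r + l = r + r - (r - l) by ring.
    by apply: vgeB (vgeD r_int r_int) (vgeW rl _).
  by apply: vgeW (vgeM rl rl_int) _; lia.
have F_unit : veq v F 0.
  by rewrite -(subrK 1 F) addrC; apply: veqD veq1 (vgeW hF _).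
exists l; split=> //.
by apply: contra_neq (veq_neq0 F_unit) => l0; rewrite -lF l0 expr0n.
Qed.

End NewtonSqrt.

Lemma trivial_sq_class_near_sq X T k :
  veq v T k -> vge v (X - T ^+ 2) (k * 2 + 1) -> trivial_sq_class X.
Proof.
move=> Tk XT; have T0 := veq_neq0 Tk.
have [|f [f0 Ff]] := @trivial_sq_class_near1 (X / T ^+ 2).
  have -> : X / T ^+ 2 - 1 = (X - T ^+ 2) / T ^+ 2 by field.
  by apply: vgeW (vgeM XT (veq_vge (veqV (veqX 2 Tk)))) _; lia.
exists (f * T); split; first by rewrite mulf_neq0.
by rewrite exprMn -Ff divfK // expf_neq0.
Qed.

Section TrivialImage.
Variables (a b : K) (k : int) (n : nat).
Hypotheses (a_val : veq v a (k * 2)) (b_val : veq v b (k * 4 + n%:Z)) (n_gt0 : (0 < n)%N).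

Let b4_val : veq v (4 * b) (k * 4 + n%:Z).
Proof. by apply: veq_eq (veqM (veq_pow2 2) b_val) _; lia. Qed.

Let b4_ge : vge v (- (4 * b)) (k * 4 + 1).
Proof. by apply/vgeN/(vgeW (veq_vge b4_val)); lia. Qed.

Section Point.
Variables X Y : K.
Hypotheses (X0 : X != 0) (XY : Y ^+ 2 = X * (X ^+ 2 - 2 * a * X + (a ^+ 2 - 4 * b))).

Let Q_near T j :
  veq v T j -> vge v (X ^+ 2 - 2 * a * X + (a ^+ 2 - 4 * b) - T ^+ 2) (j * 2 + 1) ->
  trivial_sq_class X.
Proof.
by move=> Tj QT; apply: trivial_sq_class_of_sqr_eq_mul X0 XY (trivial_sq_class_near_sq Tj QT).
Qed.

Lemma trivial_sq_class_point_near e :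
  veq v (X - a) e -> e * 2 + 1 <= k * 4 + n%:Z -> trivial_sq_class X.
Proof.
move=> Xae en; apply: (Q_near Xae).
by rewrite (_ : _ - _ = - (4 * b)); [apply: vgeW (vgeN (veq_vge b4_val)) en | ring].
Qed.

Lemma trivial_sq_class_point_split :
  (exists2 z, veq v z k & vge v (a - z ^+ 2) (k * 2 + 1)) -> trivial_sq_class X.
Proof.
case=> z z_val az.
have [Xa_ge|[Xa0 Xa_le]] : vge v (X - a) (k * 2 + 1) \/ X - a != 0 /\ v (X - a) <= k * 2.
  have [->|Xa0] := eqVneq (X - a) 0; first by left; left.
  by case: (lerP (k * 2 + 1) (v (X - a))) => ?; [left; right | right; split=> //; lia].
- by apply: (trivial_sq_class_near_sq z_val); rewrite -(subrKA a); apply: vgeD az.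
- by apply: (trivial_sq_class_point_near (veq_val Xa0)); lia.
Qed.

Lemma trivial_sq_class_point_away : v X != k * 2 -> trivial_sq_class X.
Proof.
have a2_ge : vge v (2 * a) (k * 2) by apply: vgeW (vgeM (veq_vge h2) (veq_vge a_val)) _; lia.
have X_val := veq_val X0.
case: ltgtP => // [X_lt|X_gt] _.
- apply: (Q_near X_val).
  rewrite (_ : _ - _ = - (2 * a * X) + (a ^+ 2 - 4 * b)); last by ring.
  have D_ge : vge v (a ^+ 2 - 4 * b) (k * 4).
    rewrite expr2; have a_ge := veq_vge a_val.
    by apply: vgeB (vgeW (vgeM a_ge a_ge) _) (vgeW (veq_vge b4_val) _); lia.
  by apply: vgeD (vgeN (vgeW (vgeM a2_ge (veq_vge X_val)) _)) (vgeW D_ge _); lia.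
- apply: (Q_near a_val).
  rewrite (_ : _ - _ = X * (X - 2 * a) + - (4 * b)); last by ring.
  have X_ge : vge v X (k * 2 + 1) by right; lia.
  have X2a_ge : vge v (X - 2 * a) (k * 2) by apply: vgeB (vgeW X_ge _) a2_ge; lia.
  by apply: vgeW (vgeD (vgeW (vgeM X_ge X2a_ge) _) b4_ge) _; lia.
Qed.

(* v(X) + v(Q) = v(Y^2) is even, so v(Q) cannot be v(4b) = 4k + n. *)
Lemma trivial_sq_class_point_odd : odd n -> v X = k * 2 -> trivial_sq_class X.
Proof.
move=> n_odd X_val; have n_half := odd_double_half n; rewrite n_odd in n_half.
have [Xa2_ge|[Xa0 Xa_le]] : vge v ((X - a) ^+ 2) (k * 4 + n%:Z + 1) \/
    X - a != 0 /\ v (X - a) * 2 + 1 <= k * 4 + n%:Z.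
  have [->|Xa0] := eqVneq (X - a) 0; first by left; left; rewrite expr0n.
  case: (lerP (v (X - a) * 2 + 1) (k * 4 + n%:Z)) => Xa_le; first by right.
  by left; apply: vgeW (veq_vge (veqX 2 (veq_val Xa0))) _; lia.
- have Q_val : veq v (X ^+ 2 - 2 * a * X + (a ^+ 2 - 4 * b)) (k * 4 + n%:Z).
    by rewrite (_ : _ + _ = - (4 * b) + (X - a) ^+ 2); [apply: veqD (veqN b4_val) Xa2_ge | ring].
  by have := veq_sqr_eq_mul XY (veq_eq (veq_val X0) X_val) Q_val; lia.
- exact: trivial_sq_class_point_near (veq_val Xa0) Xa_le.
Qed.

End Point.

Lemma delta_E'_rep_trivial P :
  (exists2 z, veq v z k & vge v (a - z ^+ 2) (k * 2 + 1)) \/ odd n ->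
  on_curve2 (- 2 * a) (a ^+ 2 - 4 * b) P -> trivial_sq_class (delta_E'_rep a b P).
Proof.
move=> a_sq /delta_E'_repP [||X Y X0 XY].
- by exists 1; rewrite oner_neq0 expr1n.
- by apply: (trivial_sq_class_near_sq a_val); rewrite addrAC subrr add0r; apply: vgeW b4_ge _; lia.
case: a_sq => [a_sq|n_odd]; first exact: trivial_sq_class_point_split XY a_sq.
have [X_val|X_val] := eqVneq (v X) (k * 2).
  exact: trivial_sq_class_point_odd XY n_odd X_val.
exact: trivial_sq_class_point_away XY X_val.
Qed.

End TrivialImage.

End Hensel.

End OddResidueChar.

End Valuation.

Theorem lemma3p3 (K : fieldType) (v : K -> int)
  (hv : is_discrete_valuation v) (hcomplete : v_complete v)
  (hchar : unitR v 2)
  (a b : K) (hE : disc (curveE a b) != 0)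
  (n : nat)
  (hKE : kodaira_I v (curveE a b) (2 * n)%N)
  (hKE' : kodaira_I v (curveE' a b) n) :
  ((split_mult v (curveE a b) \/ odd n) ->
     forall P, on_curve2 (- 2 * a) (a ^+ 2 - 4 * b) P ->
       trivial_sq_class (delta_E'_rep a b P)) /\
  (n = 0%N ->
     forall P, on_curve2 (- 2 * a) (a ^+ 2 - 4 * b) P ->
       in_unit_sq_class v (delta_E'_rep a b P)).
Proof.
split.
- move=> split_or_odd.
  have n_gt0 : (0 < n)%N.
    rewrite lt0n; apply/eqP => n0; move: split_or_odd hKE; rewrite n0 muln0.
    by case=> // E_split /good_not_split_mult; apply.
  have two_n_gt0 : (0 < 2 * n)%N by rewrite muln_gt0.
  have [k [c4E discE]] := kodaira_I_mult_val hv two_n_gt0 hKE.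
  have [k' [c4E' discE']] := kodaira_I_mult_val hv n_gt0 hKE'.
  have [a_val b_val] := curveE_mult_val hv hchar n_gt0 c4E discE c4E' discE'.
  have a_sq : (exists2 z, veq v z k & vge v (a - z ^+ 2) (k * 2 + 1)) \/ odd n.
    case: split_or_odd => [E_split|]; [left | by right].
    have b_ge : vge v b (k * 4 + 1) by apply: vgeW (veq_vge b_val) _; lia.
    exact: (curveE_split_sq hv hchar a_val b_ge E_split).
  by move=> P; apply: (delta_E'_rep_trivial hv hchar hcomplete a_val b_val n_gt0 a_sq).
- move=> n0; subst n.
  have [k [c4E discE]] := kodaira_I0_val hv hKE.
  have [k' [_ discE']] := kodaira_I0_val hv hKE'.
  have [a_ge b_val D_val] := curveE_good_val hv hchar c4E discE discE'.
  by move=> P; apply: (delta_E'_rep_unit hv hchar a_ge b_val D_val).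
Qed.
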